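(* Let $r\ge 1$ be an integer. For every nonnegative integer $n$, the number of overpartitions of $n$ in which every non-overlined part is greater than $r$ and has the same parity as $r+1$ (overlined parts being unrestricted apart from being distinct) equals the number of partitions of $n$ whose mex sequence has length at least $r$.
   Context: A partition of $n$ is a finite non-increasing sequence of positive integers (parts) summing to $n$ (the empty partition is the unique partition of $0$). For a partition $\lambda$, $\mathrm{mex}(\lambda)$ is the least positive integer that is not a part of $\lambda$. The mex sequence of $\lambda$ is the longest sequence of consecutive integers $\mathrm{mex}(\lambda), \mathrm{mex}(\lambda)+1, \dots$ none of which is a part of $\lambda$; its length is a positive integer or infinite (e.g. $(4)$ has mex sequence $(1,2,3)$, $(9,4,4,3,1)$ has mex sequence $(2)$, and $(4,3,3,3,2,1,1)$ has infinite mex sequence $(5,6,7,\dots)$); an infinite length counts as at least $r$. An overpartition of $n$ is a partition of $n$ in which the first occurrence of each part size may be overlined; equivalently, a pair $(\lambda,\mu)$ with $\lambda$ a partition into distinct parts (the overlined parts), $\mu$ an arbitrary partition (the non-overlined parts), and $|\lambda|+|\mu|=n$. *)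

From mathcomp Require Import all_boot.
Set Implicit Arguments. Unset Strict Implicit. Unset Printing Implicit Defensive.

Definition is_partition (n : nat) (l : seq nat) : bool :=
  [&& sorted geq l, all (fun x => 0 < x) l & sumn l == n].

Definition is_distinct_partition (n : nat) (l : seq nat) : bool :=
  is_partition n l && uniq l.

Definition is_mex (l : seq nat) (m : nat) : Prop :=
  0 < m /\ m \notin l /\ (forall k, 0 < k < m -> k \in l).

Definition mex_seq_len_ge (r : nat) (l : seq nat) : Prop :=
  exists m, is_mex l m /\ (forall j, j < r -> m + j \notin l).

(* An overpartition of n: a pair (lam, mu), lam a partition into distinct
   parts (the overlined parts), mu an arbitrary partition (the non-overlined
   parts), with |lam| + |mu| = n. *)
Definition is_overpartition (n : nat) (p : seq nat * seq nat) : Prop :=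
  exists a b, [/\ is_distinct_partition a p.1, is_partition b p.2 & a + b = n].

Definition counts (T : eqType) (P : T -> Prop) (k : nat) : Prop :=
  exists s : seq T, [/\ uniq s, (forall x, P x <-> x \in s) & size s = k].

Definition restricted_overpartition (r n : nat) (p : seq nat * seq nat) : Prop :=
  is_overpartition n p /\ all (fun x => (r < x) && (odd x == odd r.+1)) p.2.

Definition mex_partition (r n : nat) (l : seq nat) : Prop :=
  is_partition n l /\ mex_seq_len_ge r l.

From mathcomp Require Import all_boot zify.
From Stdlib Require Import Classical_Prop.
Set Implicit Arguments. Unset Strict Implicit. Unset Printing Implicit Defensive.

(* Write A_r(n) and B_r(n) for the two sides.  For n > r both satisfy
   A_r(n) = A_r(n - r - 1) + A_(r+2)(n).  For overpartitions, split on whether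
   r + 1 is a non-overlined part; deleting one copy of it leaves A_r(n - r - 1).
   For partitions, split on whether the mex sequence has length exactly r or
   r + 1; raising the part mex - 1 (a zero part when mex = 1) by r + 1 is a
   bijection from B_r(n - r - 1) onto the partitions with such a short mex
   sequence.  For n <= r both sides reduce to partitions of n into distinct
   parts and partitions of n whose parts fill an interval 1..k, which are
   conjugate; their equinumerosity follows from the same kind of recursion,
   adding or removing one column of the Young diagram. *)

Section Counting.

Variables T U : eqType.

Definition bij_on (P : T -> Prop) (Q : U -> Prop) (f : T -> U) (g : U -> T) :=
  [/\ forall x, P x -> Q (f x), forall y, Q y -> P (g y),
      forall x, P x -> g (f x) = x & forall y, Q y -> f (g y) = y].

Definition equinumerous (P : T -> Prop) (Q : U -> Prop) :=
  exists k, counts P k /\ counts Q k.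

Lemma counts_ext (P Q : T -> Prop) k :
  (forall x, P x <-> Q x) -> counts P k -> counts Q k.
Proof.
by move=> PQ [s [s_uniq Ps <-]]; exists s; split=> // x; rewrite -Ps PQ.
Qed.

Lemma counts_bij (P : T -> Prop) (Q : U -> Prop) f g k :
  bij_on P Q f g -> counts P k -> counts Q k.
Proof.
move=> [PQ QP gK fK] [s [s_uniq Ps <-]]; exists (map f s); split.
- rewrite map_inj_in_uniq // => x y /Ps Px /Ps Py fxy.
  by rewrite -(gK x) // fxy gK.
- move=> y; split=> [Qy | /mapP[x /Ps Px ->]]; last exact: PQ.
  by rewrite -(fK y Qy) map_f // -Ps; apply: QP.
- by rewrite size_map.
Qed.

Lemma counts0 (P : T -> Prop) : (forall x, ~ P x) -> counts P 0.
Proof. by move=> notP; exists [::]; split=> // x; split=> // /notP. Qed.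

Lemma counts_split (P C : T -> Prop) a b :
  counts (fun x => P x /\ C x) a -> counts (fun x => P x /\ ~ C x) b ->
  counts P (a + b).
Proof.
move=> [s [s_uniq Ps <-]] [t [t_uniq Pt <-]]; exists (s ++ t); split.
- rewrite cat_uniq s_uniq t_uniq andbT; apply/hasPn => x /Pt[_ notCx].
  by apply/negP => /Ps[].
- move=> x; rewrite mem_cat; split=> [Px | /orP[/Ps[] | /Pt[]] //].
  by case: (classic (C x)) => Cx; apply/orP; [left; apply/Ps | right; apply/Pt].
- by rewrite size_cat.
Qed.

End Counting.

Section Equinumerous.

Variables T U T' U' : eqType.
Implicit Types (P C : T -> Prop) (Q D : U -> Prop).

Lemma equinumerous_ext P Q (P' : T -> Prop) (Q' : U -> Prop) :
  (forall x, P x <-> P' x) -> (forall y, Q y <-> Q' y) ->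
  equinumerous P Q -> equinumerous P' Q'.
Proof.
move=> PP QQ [k [cP cQ]].
by exists k; split; [exact: counts_ext cP | exact: counts_ext cQ].
Qed.

Lemma equinumerous_bij P Q (P' : T' -> Prop) (Q' : U' -> Prop) f g f' g' :
  bij_on P P' f g -> bij_on Q Q' f' g' ->
  equinumerous P Q -> equinumerous P' Q'.
Proof.
move=> bP bQ [k [cP cQ]].
by exists k; split; [exact: counts_bij bP cP | exact: counts_bij bQ cQ].
Qed.

Lemma equinumerous0 P Q :
  (forall x, ~ P x) -> (forall y, ~ Q y) -> equinumerous P Q.
Proof. by move=> notP notQ; exists 0; split; apply: counts0. Qed.

Lemma equinumerous_split P Q C D :
  equinumerous (fun x => P x /\ C x) (fun y => Q y /\ D y) ->
  equinumerous (fun x => P x /\ ~ C x) (fun y => Q y /\ ~ D y) ->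
  equinumerous P Q.
Proof.
move=> [a [cPC cQD]] [b [cPnC cQnD]].
by exists (a + b); split; [apply: counts_split cPnC|apply: counts_split cQnD].
Qed.

End Equinumerous.

Lemma geq_total : total geq.
Proof. by move=> x y; apply: leq_total. Qed.

Lemma geq_trans : transitive geq.
Proof. by move=> x y z /= le_xy le_yz; apply: leq_trans le_xy. Qed.

Lemma geq_anti : antisymmetric geq.
Proof. by move=> x y; rewrite /= andbC => /anti_leq. Qed.

Lemma mem_count (x : nat) s : (x \in s) = (0 < count_mem x s).
Proof. by rewrite -has_pred1 has_count. Qed.

Lemma sorted_geq_eq (s t : seq nat) : sorted geq s -> sorted geq t ->
  (forall x, count_mem x s = count_mem x t) -> s = t.
Proof.
move=> s_sorted t_sorted st; apply: (sorted_eq geq_trans geq_anti) => //.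
by apply/allP => x _ /=; rewrite st.
Qed.

Lemma mem_le_sumn x s : x \in s -> x <= sumn s.
Proof. by elim: s => //= y s IH; rewrite in_cons => /orP[/eqP-> | /IH]; lia. Qed.

Lemma size_le_sumn (s : seq nat) : all (fun x => 0 < x) s -> size s <= sumn s.
Proof. by elim: s => //= x s IH /andP[x_gt0 /IH]; lia. Qed.

Lemma partitionE n l :
  is_partition n l = [&& sorted geq l, count_mem 0 l == 0 & sumn l == n].
Proof.
rewrite /is_partition; congr [&& _, _ & _]; elim: l => //= x l ->.
by case: x.
Qed.

Lemma sumn_rem a (s : seq nat) : a \in 0 :: s -> sumn (rem a s) + a = sumn s.
Proof.
rewrite in_cons => /orP[/eqP-> | a_s].
  by rewrite addn0; case: (boolP (0 \in s)) => [/perm_to_rem/perm_sumn -> | /rem_id ->].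
by rewrite (perm_sumn (perm_to_rem a_s)) /= addnC.
Qed.

Lemma partition_sumn n l : is_partition n l -> sumn l = n.
Proof. by case/and3P=> _ _ /eqP. Qed.

Lemma partition_mem_le n l x : is_partition n l -> x \in l -> x <= n.
Proof. by move=> /partition_sumn <-; apply: mem_le_sumn. Qed.

Lemma partition_size n l : is_partition n l -> size l <= n.
Proof. by case/and3P=> _ l_pos /eqP <-; apply: size_le_sumn. Qed.

Lemma partition_notin0 n l : is_partition n l -> 0 \notin l.
Proof. by rewrite partitionE => /and3P[_ /eqP/count_memPn]. Qed.

(* Replaces a part [x] of [l] by [y], a part [0] standing for no part at all:
   [move_part 0 y] inserts [y] and [move_part x 0] deletes [x]. *)
Definition move_part (x y : nat) (l : seq nat) : seq nat :=
  rem 0 (sort geq (y :: rem x l)).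

Section MovePart.

Variables (x y : nat) (l : seq nat).

Lemma count_move_part z :
  count_mem z (move_part x y l) = count_mem z l - (z == x) + (z == y) - (z == 0).
Proof.
rewrite /move_part count_mem_rem (permP (permEl (perm_sort geq _))) /= count_mem_rem.
by rewrite [y == z]eq_sym [x == z]eq_sym [0 == z]eq_sym addnC.
Qed.

Lemma sorted_move_part : sorted geq (move_part x y l).
Proof.
exact/(subseq_sorted geq_trans (rem_subseq _ _))/(sort_sorted geq_total).
Qed.

Lemma mem_move_part : 0 < y -> y \in move_part x y l.
Proof. by rewrite mem_count count_move_part eqxx; lia. Qed.

Lemma all_move_part (a : pred nat) :
  all a l -> (0 < y -> a y) -> all a (move_part x y l).
Proof.
move=> /allP a_l a_y; apply/allP => z; rewrite mem_count count_move_part => z_in.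
case: (eqVneq z y) => [z_y | z_y]; last by apply: a_l; rewrite mem_count; lia.
case: (posnP y) => [y0 | /a_y]; last by rewrite z_y.
by apply: a_l; rewrite mem_count; move: z_in; rewrite z_y y0; lia.
Qed.

Lemma uniq_move_part : uniq l -> y \notin l -> uniq (move_part x y l).
Proof.
move=> l_uniq y_l; rewrite rem_uniq // sort_uniq /= rem_uniq // andbT.
by apply: contra y_l; apply: mem_rem.
Qed.

Lemma sumn_move_part : x \in 0 :: l -> sumn (move_part x y l) + x = sumn l + y.
Proof.
move=> x_l; rewrite /move_part -[sumn (rem 0 _)]addn0 sumn_rem ?mem_head //.
by rewrite (perm_sumn (permEl (perm_sort geq _))) /= -(sumn_rem x_l); lia.
Qed.

Lemma move_part_partition n n' : is_partition n l -> x \in 0 :: l ->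
  n + y = n' + x -> is_partition n' (move_part x y l).
Proof.
rewrite !partitionE sorted_move_part count_move_part => /and3P[_ /eqP l0 /eqP <-].
by move=> /sumn_move_part; rewrite l0 /=; lia.
Qed.

End MovePart.

Lemma move_partK x y l n : is_partition n l -> x \in 0 :: l ->
  move_part y x (move_part x y l) = l.
Proof.
rewrite partitionE in_cons mem_count => /and3P[l_sorted /eqP l0 _] x_l.
apply: sorted_geq_eq => [||z]; [exact: sorted_move_part | exact: l_sorted |].
rewrite !count_move_part; case: (eqVneq z 0) => [-> | z0]; first by rewrite l0; lia.
rewrite !subn0; case: (eqVneq z x) x_l => [<- | _ _]; last lia.
by rewrite (negbTE z0) /= => c_z; lia.
Qed.

Lemma mex_exists (l : seq nat) : exists m, (0 < m) && (m \notin l).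
Proof.
exists (sumn l).+1; apply/andP; split=> //.
by apply/negP => /mem_le_sumn; rewrite ltnn.
Qed.

Definition mex (l : seq nat) : nat := ex_minn (mex_exists l).

Lemma mexP l : is_mex l (mex l).
Proof.
rewrite /mex; case: ex_minnP => m /andP[m_gt0 m_l] m_min.
split=> //; split=> // k /andP[k_gt0 lt_km]; apply/negPn/negP => k_l.
by have := m_min k; rewrite k_gt0 k_l => /(_ isT); rewrite leqNgt lt_km.
Qed.

Lemma mex_unique l m : is_mex l m -> mex l = m.
Proof.
move=> [m_gt0 [m_l below_m]]; have [mex_gt0 [mex_l below_mex]] := mexP l.
case: (ltngtP (mex l) m) => // [lt_mex_m | lt_m_mex].
- by move: mex_l; rewrite below_m ?mex_gt0.
- by move: m_l; rewrite below_mex ?m_gt0.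
Qed.

Lemma mex_partitionE r n l :
  mex_partition r n l <-> is_partition n l /\ forall j, j < r -> mex l + j \notin l.
Proof.
split=> [[l_part [m [/mex_unique <- gap]]] | [l_part gap]] //.
by split=> //; exists (mex l); split=> //; apply: mexP.
Qed.

Lemma pred_mex_mem l : (mex l).-1 \in 0 :: l.
Proof.
have [mex_gt0 [_ below_mex]] := mexP l; rewrite in_cons.
by case: (posnP (mex l).-1) => [-> // | ?]; rewrite below_mex ?orbT //; lia.
Qed.

Section MexRecurrence.

Variable r : nat.

Definition mex_seq_short (l : seq nat) : bool :=
  (mex l + r \in l) || (mex l + r.+1 \in l).

Lemma mex_partition_long n l :
  mex_partition r n l /\ ~ mex_seq_short l <-> mex_partition r.+2 n l.
Proof.
rewrite /mex_seq_short !mex_partitionE; split.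
- move=> [[l_part gap] /negP]; rewrite negb_or => /andP[r_l r1_l].
  by split=> // j; rewrite ltnS leq_eqVlt ltnS leq_eqVlt => /or3P[/eqP-> | /eqP-> | /gap].
- move=> [l_part gap]; split; first by split=> // j lt_jr; apply: gap; lia.
  by apply/negP; rewrite negb_or !gap.
Qed.

(* The part just above a mex sequence of length [r] or [r.+1]. *)
Definition mex_seq_end (l : seq nat) : nat :=
  if mex l + r \in l then mex l + r else mex l + r.+1.

Lemma mex_seq_end_mem l : mex_seq_short l -> mex_seq_end l \in l.
Proof. by rewrite /mex_seq_end /mex_seq_short; case: ifP => // ->. Qed.

Lemma mex_seq_end_gt l : r < mex_seq_end l.
Proof. by have [mex_gt0 _] := mexP l; rewrite /mex_seq_end; case: ifP; lia. Qed.

Definition mex_raise (u : seq nat) : seq nat := move_part (mex u).-1 (mex u + r) u.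

Definition mex_lower (l : seq nat) : seq nat :=
  move_part (mex_seq_end l) (mex_seq_end l - r.+1) l.

Lemma mex_seq_endE l :
  mex_seq_end l = mex l + r \/ mex_seq_end l = mex l + r.+1 /\ mex l + r \notin l.
Proof. by rewrite /mex_seq_end; case: ifP => [_ | /negbT]; [left | right]. Qed.

Hypothesis r_gt0 : 0 < r.

Lemma mex_partition_mexE n l m :
  mex_partition r n l /\ mex l = m <->
  [/\ is_partition n l, 0 < m, forall y, 0 < y < m -> y \in l
    & forall j, j < r -> m + j \notin l].
Proof.
rewrite mex_partitionE; split.
  move=> [[l_part gap] <-]; have [mex_gt0 [_ below_mex]] := mexP l.
  by split=> // y y_range; apply: below_mex.
move=> [l_part m_gt0 below_m gap].
have m_mex : mex l = m.
  by apply: mex_unique; do !split=> //; rewrite -[m]addn0; apply: gap.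
by rewrite m_mex.
Qed.

Lemma mex_partition_counts n l :
  mex_partition r n l ->
  [/\ count_mem 0 l = 0, forall y, 0 < y < mex l -> 0 < count_mem y l
    & forall j, j < r -> count_mem (mex l + j) l = 0].
Proof.
move=> l_mp; have /mex_partition_mexE[l_part _ below gap] := conj l_mp (erefl (mex l)).
move: l_part; rewrite partitionE => /and3P[_ /eqP l0 _].
by split=> // [y /below | j /gap /count_memPn]; rewrite -?mem_count.
Qed.

Lemma mex_raise_spec n u : mex_partition r n u ->
  [/\ mex_partition r (n + r.+1) (mex_raise u), mex_seq_short (mex_raise u)
    & mex_seq_end (mex_raise u) = mex u + r].
Proof.
move=> u_mp; have [u_part _] := u_mp; have [u0 below gap] := mex_partition_counts u_mp.
have [m_gt0 _] := mexP u; set m := mex u in below gap m_gt0 *; set l := mex_raise u.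
have cnt z : count_mem z l = count_mem z u - (z == m.-1) + (z == m + r) - (z == 0).
  exact: count_move_part.
have l_part : is_partition (n + r.+1) l.
  by apply: move_part_partition u_part (pred_mex_mem u) _; rewrite -/m; lia.
rewrite /mex_seq_short /mex_seq_end !mem_count !cnt.
(* The mex drops to [m - 1] exactly when [m - 1] is a part of multiplicity one. *)
case: (boolP ((1 < m) && (count_mem m.-1 u == 1))) => [/andP[m_gt1 /eqP single] | multiple].
- have [l_mp ->] : mex_partition r (n + r.+1) l /\ mex l = m.-1.
    apply/mex_partition_mexE; split=> //; first lia.
      by move=> y y_range; rewrite mem_count cnt; have := below y; lia.
    move=> [|j] lt_jr; rewrite mem_count cnt; first by rewrite addn0; lia.
    have -> : m.-1 + j.+1 = m + j by lia.
    by rewrite gap; lia.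
  have -> : m.-1 + r = m + r.-1 by lia.
  have -> : m.-1 + r.+1 = m + r by lia.
  have := gap r.-1; rewrite ltn_predL r_gt0 => /(_ isT) gap_r.
  by split=> //; [apply/orP; right | case: ifP]; lia.
have [l_mp ->] : mex_partition r (n + r.+1) l /\ mex l = m.
  apply/mex_partition_mexE; split=> // [y y_range | j lt_jr]; rewrite mem_count cnt.
    by have := below y y_range; case: (eqVneq y m.-1) multiple => [-> | _]; lia.
  by rewrite gap //; lia.
by split=> //; [apply/orP; left | case: ifP]; lia.
Qed.

Lemma mex_lower_spec n l : mex_partition r (n + r.+1) l -> mex_seq_short l ->
  mex_partition r n (mex_lower l) /\ mex (mex_lower l) = mex_seq_end l - r.
Proof.
move=> l_mp short; have [l_part _] := l_mp; have [l0 below gap] := mex_partition_counts l_mp.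
have [m_gt0 _] := mexP l; have g_l := mex_seq_end_mem short.
have g_gt := mex_seq_end_gt l; have g_cases := mex_seq_endE l.
set m := mex l in below gap m_gt0 g_cases *.
set g := mex_seq_end l in g_l g_gt g_cases *; set v := mex_lower l.
have cnt z : count_mem z v = count_mem z l - (z == g) + (z == g - r.+1) - (z == 0).
  exact: count_move_part.
apply/mex_partition_mexE; split; first 2 last.
- move=> y /andP[y_gt0 lt_y]; rewrite mem_count cnt.
  case: (ltnP y m) => [lt_ym | le_my]; first by have := below y; lia.
  by case: g_cases lt_y => [-> | [-> _]]; lia.
- move=> j lt_jr; rewrite mem_count cnt.
  case: g_cases => [-> | [-> /count_memPn m_r]]; first by rewrite addnK gap //; lia.
  have -> : m + r.+1 - r + j = m + j.+1 by lia.
  case: (ltnP j.+1 r) => [lt_j1r | le_rj1]; first by rewrite gap //; lia.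
  have -> : j.+1 = r by lia.
  by rewrite m_r; lia.
- by apply: move_part_partition l_part _ _; rewrite ?in_cons ?g_l ?orbT //; lia.
- lia.
Qed.

Lemma mex_raise_bij n :
  bij_on (mex_partition r n)
    (fun l => mex_partition r (n + r.+1) l /\ mex_seq_short l) mex_raise mex_lower.
Proof.
split=> [u /mex_raise_spec[] // | l [l_mp /(mex_lower_spec l_mp)[] //] | u u_mp |].
  have [u_part _] := u_mp; have [_ _ end_eq] := mex_raise_spec u_mp.
  have [mex_gt0 _] := mexP u.
  rewrite /mex_lower end_eq (_ : mex u + r - r.+1 = (mex u).-1); last lia.
  exact: move_partK u_part (pred_mex_mem u).
move=> l [l_mp short]; have [l_part _] := l_mp.
have [_ mex_eq] := mex_lower_spec l_mp short; have g_gt := mex_seq_end_gt l.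
rewrite /mex_raise mex_eq subnK ?(ltnW g_gt) //.
rewrite (_ : (mex_seq_end l - r).-1 = mex_seq_end l - r.+1); last lia.
by apply: move_partK l_part _; rewrite in_cons mex_seq_end_mem ?orbT.
Qed.

End MexRecurrence.

Lemma restricted_overpartition_large r n p :
  restricted_overpartition r n p /\ ~ (r.+1 \in p.2) <-> restricted_overpartition r.+2 n p.
Proof.
have odd_r3 : odd r.+3 = odd r.+1 by rewrite /= negbK.
rewrite /restricted_overpartition odd_r3; split.
- move=> [[p_op /allP parts] r1_p]; split=> //; apply/allP => x x_p.
  have /andP[lt_rx /eqP par_x] := parts x x_p.
  have x_r1 : x != r.+1 by apply/eqP => x_eq; apply: r1_p; rewrite -x_eq.
  have x_r2 : x != r.+2 by apply/eqP => x_eq; move: par_x; rewrite x_eq /=; case: (odd r).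
  by rewrite par_x eqxx andbT; lia.
- move=> [p_op /allP parts]; split; first split=> //.
    by apply/allP => x /parts /andP[lt_rx ->]; rewrite andbT; lia.
  by move=> /parts /andP[]; lia.
Qed.

Lemma restricted_overpartition_add_bij r n :
  bij_on (restricted_overpartition r n)
    (fun p => restricted_overpartition r (n + r.+1) p /\ r.+1 \in p.2)
    (fun p => (p.1, move_part 0 r.+1 p.2)) (fun p => (p.1, move_part r.+1 0 p.2)).
Proof.
split=> [[D M] | [D M] | [D M] | [D M]]; rewrite /restricted_overpartition /is_overpartition /=.
- move=> [[a [b [D_part M_part <-]]] M_parts]; split; last exact: mem_move_part.
  split; last by apply: all_move_part => //; rewrite ltnSn eqxx.
  exists a, (b + r.+1); split=> //; last by rewrite addnA.
  by apply: move_part_partition M_part _ _; rewrite ?mem_head ?addn0.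
- move=> [[[a [b [D_part M_part ab]]] M_parts] r1_M]; split; last exact: all_move_part.
  have le_r1_b := partition_mem_le M_part r1_M.
  exists a, (b - r.+1); split=> //; last lia.
  by apply: move_part_partition M_part _ _; rewrite ?in_cons ?r1_M ?orbT //; lia.
- move=> [[a [b [_ M_part _]]] _].
  by rewrite (move_partK _ M_part) ?mem_head.
- move=> [[[a [b [_ M_part _]]] _] r1_M].
  by rewrite (move_partK _ M_part) // in_cons r1_M orbT.
Qed.

Definition distinct_partition_le (j n : nat) (D : seq nat) : Prop :=
  is_distinct_partition n D /\ all (fun x => x <= j) D.

Lemma distinct_partition_le_notin j n D :
  distinct_partition_le j.+1 n D /\ ~ (j.+1 \in D) <-> distinct_partition_le j n D.
Proof.
split=> [[[D_dp /allP D_le] j1_D] | [D_dp /allP D_le]].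
- split=> //; apply/allP => x x_D; have := D_le x x_D.
  by rewrite leq_eqVlt ltnS => /orP[/eqP x_j1 | //]; rewrite x_j1 in x_D.
- by split; [split=> //; apply/allP => x /D_le | move=> /D_le]; lia.
Qed.

Lemma distinct_partition_le_add_bij j n :
  bij_on (distinct_partition_le j n)
    (fun D => distinct_partition_le j.+1 (n + j.+1) D /\ j.+1 \in D)
    (move_part 0 j.+1) (move_part j.+1 0).
Proof.
split=> D.
- move=> [/andP[D_part D_uniq] D_le]; split; last exact: mem_move_part.
  split; last by apply: all_move_part; first by apply: sub_all D_le => x /=; lia.
  apply/andP; split; first by apply: move_part_partition D_part _ _; rewrite ?mem_head ?addn0.
  by apply: uniq_move_part => //; apply/negP => /(allP D_le); lia.
- move=> [[/andP[D_part D_uniq] D_le] j1_D].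
  have j1_0D : j.+1 \in 0 :: D by rewrite in_cons j1_D orbT.
  split.
    apply/andP; split; first by apply: move_part_partition D_part j1_0D _; rewrite addn0.
    exact: uniq_move_part D_uniq (partition_notin0 D_part).
  apply/allP => x; rewrite mem_count count_move_part count_uniq_mem // => x_in.
  by have := allP D_le x; rewrite mem_count count_uniq_mem //; lia.
- by move=> [/andP[D_part _] _]; rewrite (move_partK _ D_part) ?mem_head.
- move=> [[/andP[D_part _] _] j1_D].
  by rewrite (move_partK _ D_part) // in_cons j1_D orbT.
Qed.

Definition gapless (l : seq nat) : Prop :=
  forall x, x \in l -> forall y, 0 < y <= x -> y \in l.

Definition gapless_partition (j n : nat) (l : seq nat) : Prop :=
  [/\ is_partition n l, gapless l & size l <= j].

Lemma gapless_partition_size j n l :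
  gapless_partition j.+1 n l /\ size l <> j.+1 <-> gapless_partition j n l.
Proof.
split=> [[[l_part l_gapless le_l_j1] l_j1] | [l_part l_gapless le_l_j]].
- by split=> //; lia.
- by split; [split=> //; lia | lia].
Qed.

(* Adds a column of height [j.+1] to the Young diagram of [u], provided
   [size u <= j]. *)
Definition add_column (j : nat) (u : seq nat) : seq nat :=
  map S u ++ nseq (j.+1 - size u) 1.

Definition remove_column (l : seq nat) : seq nat :=
  map predn (filter (fun x => 1 < x) l).

Lemma mem_remove_column y l : (y \in remove_column l) = (0 < y) && (y.+1 \in l).
Proof.
apply/mapP/andP => [[x] | [y_gt0 y1_l]]; last by exists y.+1; rewrite // mem_filter y1_l andbT.
by rewrite mem_filter => /andP[x_gt1 x_l] ->; rewrite prednK; [split=> //; lia | lia].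
Qed.

Lemma size_remove_column l : size (remove_column l) = count (fun x => 1 < x) l.
Proof. by rewrite size_map size_filter. Qed.

Lemma sorted_remove_column l : sorted geq l -> sorted geq (remove_column l).
Proof.
move=> l_sorted; rewrite sorted_map.
by apply: sub_sorted (sorted_filter geq_trans _ l_sorted) => x y /=; lia.
Qed.

Lemma sorted_cat_ones s c : sorted geq s -> all (fun x => 0 < x) s ->
  sorted geq (s ++ nseq c 1).
Proof.
elim: s => [_ _ | x s IH] /=; first by elim: c => // -[|c] // IH /=; rewrite leqnn.
rewrite !(path_sortedE geq_trans) all_cat => /andP[x_ge s_sorted] /andP[x_gt0 s_pos].
by rewrite x_ge IH // andbT; apply/allP => y /nseqP[-> _].
Qed.

Lemma sorted_add_column j u : sorted geq u -> all (fun x => 0 < x) u ->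
  sorted geq (add_column j u).
Proof.
move=> u_sorted u_pos; apply: sorted_cat_ones; last by rewrite all_map; apply/allP.
by rewrite sorted_map; apply: sub_sorted u_sorted.
Qed.

Lemma remove_columnK j u : all (fun x => 0 < x) u -> remove_column (add_column j u) = u.
Proof.
move=> u_pos; rewrite /remove_column /add_column filter_cat.
have -> : [seq x <- nseq (j.+1 - size u) 1 | 1 < x] = [::] by elim: (j.+1 - size u).
have -> : [seq x <- map S u | 1 < x] = map S u by apply/all_filterP; rewrite all_map.
by rewrite cats0 -map_comp map_id_in.
Qed.

Lemma add_columnK j l : sorted geq l -> all (fun x => 0 < x) l -> size l = j.+1 ->
  add_column j (remove_column l) = l.
Proof.
move=> l_sorted l_pos l_size.
apply: (sorted_eq geq_trans geq_anti); [|exact: l_sorted|].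
  apply: sorted_add_column; first exact: sorted_remove_column.
  by apply/allP => x; rewrite mem_remove_column => /andP[].
have big_parts : map S (remove_column l) = filter (fun x => 1 < x) l.
  by rewrite -map_comp map_id_in // => x; rewrite mem_filter /=; lia.
have ones : nseq (j.+1 - size (remove_column l)) 1 = filter (predC (fun x => 1 < x)) l.
  have /all_pred1P -> : all (pred1 1) (filter (predC (fun x => 1 < x)) l).
    by apply/allP => x; rewrite mem_filter /= => /andP[x_le1 /(allP l_pos)]; lia.
  rewrite size_filter size_remove_column -l_size -(count_predC (fun x => 1 < x) l).
  by rewrite addKn.
by rewrite /add_column big_parts ones perm_filterC.
Qed.

Lemma sumn_add_column j u : size u <= j -> sumn (add_column j u) = sumn u + j.+1.
Proof.
have sumn_S : sumn (map S u) = sumn u + size u by elim: u => //= x u ->; lia.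
by move=> le_u_j; rewrite sumn_cat sumn_nseq sumn_S; lia.
Qed.

Lemma add_column_spec j n u : gapless_partition j n u ->
  gapless_partition j.+1 (n + j.+1) (add_column j u) /\ size (add_column j u) = j.+1.
Proof.
move=> [/and3P[u_sorted u_pos /eqP u_sum] u_gapless le_u_j].
have size_l : size (add_column j u) = j.+1 by rewrite size_cat size_map size_nseq; lia.
split=> //; split; last by rewrite size_l.
  apply/and3P; split; [exact: sorted_add_column | rewrite /add_column | apply/eqP].
    by rewrite all_cat all_map; apply/andP; split; apply/allP => // x /nseqP[->].
  by rewrite sumn_add_column // u_sum.
move=> x; rewrite /add_column mem_cat => x_l y /andP[y_gt0 le_yx]; rewrite mem_cat.
case: (eqVneq y 1) => [-> | y_ne1].
  by apply/orP; right; rewrite mem_nseq eqxx andbT; lia.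
apply/orP; left; case/orP: x_l => [/mapP[w w_u x_w] | /nseqP[x1 _]]; last lia.
by rewrite -(prednK y_gt0) map_f //; apply: (u_gapless w w_u); lia.
Qed.

Lemma remove_column_spec j n l :
  gapless_partition j.+1 (n + j.+1) l -> size l = j.+1 ->
  gapless_partition j n (remove_column l).
Proof.
move=> [/and3P[l_sorted l_pos /eqP l_sum] l_gapless _] l_size.
have one_l : 1 \in l.
  case: l l_size l_gapless l_pos {l_sorted l_sum} => // x l _ l_gapless /andP[x_gt0 _].
  by apply: (l_gapless x (mem_head _ _)); rewrite leqnn x_gt0.
have le_j : size (remove_column l) <= j.
  have : 0 < count (predC (fun x => 1 < x)) l by rewrite -has_count; apply/hasP; exists 1.
  by have := count_predC (fun x => 1 < x) l; rewrite size_remove_column l_size; lia.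
split=> //.
- apply/and3P; split; first exact: sorted_remove_column.
    by apply/allP => x; rewrite mem_remove_column => /andP[].
  by apply/eqP; have := sumn_add_column le_j; rewrite add_columnK // l_sum; lia.
- move=> y; rewrite mem_remove_column => /andP[y_gt0 y1_l] z /andP[z_gt0 le_zy].
  by rewrite mem_remove_column z_gt0 (l_gapless _ y1_l) //; lia.
Qed.

Lemma add_column_bij j n :
  bij_on (gapless_partition j n)
    (fun l => gapless_partition j.+1 (n + j.+1) l /\ size l = j.+1)
    (add_column j) remove_column.
Proof.
split=> [u /add_column_spec // | l [/remove_column_spec l_gp /l_gp //] | u | l].
- by move=> [/and3P[_ u_pos _] _ _]; apply: remove_columnK.
- by move=> [[/and3P[l_sorted l_pos _] _ _] l_size]; apply: add_columnK.
Qed.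

Lemma equinumerous_distinct_gapless j n :
  equinumerous (distinct_partition_le j n) (gapless_partition j n).
Proof.
elim: j n => [|j IH] n.
  have empty_D D : distinct_partition_le 0 n D <-> D = [::] /\ n = 0.
    split=> [[/andP[/and3P[_ D_pos /eqP <-] _] D_le0] | [-> ->]] //.
    by case: D D_pos D_le0 => //= x D /andP[x_gt0 _] /andP[x_le0 _]; lia.
  have empty_l l : gapless_partition 0 n l <-> l = [::] /\ n = 0.
    by split=> [[/and3P[_ _ /eqP <-]]|[-> ->]] //; case: l.
  apply: equinumerous_ext (fun D => iff_sym (empty_D D)) (fun l => iff_sym (empty_l l)) _.
  case: n {empty_D empty_l} => [|n]; last by apply: equinumerous0 => l [].
  by exists 1; split; exists [:: [::]]; split=> // l; rewrite inE; split=> [[->] | /eqP->].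
apply: (equinumerous_split (C := fun D : seq nat => j.+1 \in D)
                           (D := fun l : seq nat => size l = j.+1)).
  case: (leqP j.+1 n) => [le_j1n | lt_nj1].
    rewrite -(subnK le_j1n).
    exact: equinumerous_bij (distinct_partition_le_add_bij j _) (add_column_bij j _) (IH _).
  apply: equinumerous0 => [D [[/andP[D_part _] _] j1_D] | l [[l_part _ _] l_size]].
    by have := partition_mem_le D_part j1_D; lia.
  by have := partition_size l_part; lia.
apply: equinumerous_ext (IH n) => x; apply: iff_sym.
  exact: distinct_partition_le_notin.
exact: gapless_partition_size.
Qed.

Lemma restricted_overpartition_small r n D M : n <= r ->
  restricted_overpartition r n (D, M) -> M = [::] /\ is_distinct_partition n D.
Proof.
rewrite /restricted_overpartition /is_overpartition /=.
move=> le_nr [[a [b [D_dp M_part ab]]] /allP M_parts].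
case: M M_part M_parts => [/partition_sumn b0 | x M M_part M_parts].
  by rewrite -ab -b0 addn0.
have /andP[lt_rx _] := M_parts x (mem_head x M).
by have := partition_mem_le M_part (mem_head x M); lia.
Qed.

Lemma restricted_overpartition_small_bij r n : n <= r ->
  bij_on (distinct_partition_le n n) (restricted_overpartition r n) (fun D => (D, [::])) fst.
Proof.
move=> le_nr; split=> [D [D_dp _] | [D M] /(restricted_overpartition_small le_nr) | // |].
- by split=> //; exists n, 0; rewrite addn0.
- move=> [_ D_dp]; split=> //=.
  by apply/allP => x /(partition_mem_le (andP D_dp).1).
- by move=> [D M] /(restricted_overpartition_small le_nr)[->].
Qed.

Lemma mex_partition_small r n l : n <= r ->
  gapless_partition n n l <-> mex_partition r n l.
Proof.
move=> le_nr; rewrite mex_partitionE; have [mex_gt0 [mex_l below_mex]] := mexP l; split.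
  move=> [l_part l_gapless _]; split=> // j _; apply: contra mex_l => mex_j_l.
  by apply: (l_gapless _ mex_j_l); rewrite mex_gt0 leq_addr.
move=> [l_part gap]; split=> //; last exact: partition_size.
move=> x x_l y /andP[y_gt0 le_yx]; case: (ltnP x (mex l)) => [lt_x_mex | le_mex_x].
  by apply: below_mex; rewrite y_gt0; lia.
suff : x - mex l < r by move/gap; rewrite subnKC // x_l.
by have := partition_mem_le l_part x_l; lia.
Qed.

Lemma equinumerous_small r n : n <= r ->
  equinumerous (restricted_overpartition r n) (mex_partition r n).
Proof.
move=> le_nr; have [k [count_D count_l]] := equinumerous_distinct_gapless n n.
exists k; split; first exact: counts_bij (restricted_overpartition_small_bij le_nr) count_D.
by apply: counts_ext count_l => l; apply: mex_partition_small.
Qed.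

Theorem theorem2p3 (r : nat) (hr : 1 <= r) (n : nat) :
  exists k : nat,
    counts (restricted_overpartition r n) k /\ counts (mex_partition r n) k.
Proof.
(* Both recursive calls decrease [n - r]. *)
have [d] := ubnP (n - r); elim: d r hr n => // d IH r r_gt0 n lt_nr_d.
case: (leqP n r) => [/equinumerous_small // | lt_rn].
apply: (equinumerous_split (C := fun p : seq nat * seq nat => r.+1 \in p.2)
                           (D := mex_seq_short r)).
  rewrite -(subnK lt_rn).
  apply: equinumerous_bij (restricted_overpartition_add_bij r _) (mex_raise_bij r_gt0 _)
                          (IH r r_gt0 _ _); lia.
apply: equinumerous_ext (IH r.+2 isT n _) => [p | l | ]; last lia.
  exact: iff_sym (restricted_overpartition_large r n p).
exact: iff_sym (mex_partition_long r n l).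
Qed.
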